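(* Consider the closed-loop system described in the context, with the gain-scheduling controller $u[k]=K[k]\tilde y[k]$, $K[k]=\alpha_1[k]K_1+\alpha_2[k]K_2$, where $K_1,K_2\in\mathbb{R}^{n_u\times n_y}$ are given, $\Delta_1:=\Delta_{\min}$, $\Delta_2:=\Delta_{\max}$, and $$\alpha_1[k]:=\frac{\Delta_2-E[k]}{\Delta_2-\Delta_1},\qquad \alpha_2[k]:=\frac{E[k]-\Delta_1}{\Delta_2-\Delta_1}.$$ Let $\sigma\in(0,1]$ and $\gamma>0$. For $\bm j=(j_1,\dots,j_{n_y})\in\mathcal{J}_{n_y}$ let $\Lambda_{\bm j}:=\mathrm{diag}(\lambda_1 j_1,\dots,\lambda_{n_y}j_{n_y})$. Suppose there exist, for $p=1,2$ and $\bm j\in\mathcal{J}_{n_y}$, positive definite matrices $P_p\in\mathbb{R}^{n_x\times n_x}$, symmetric matrices with nonnegative entries $$\begin{bmatrix} L_{p,\bm j} & N_{p,\bm j}\\ N_{p,\bm j}^{\top} & M_{p,\bm j}\end{bmatrix}\in\mathbb{R}^{2n_y\times 2n_y}\quad(L_{p,\bm j},M_{p,\bm j},N_{p,\bm j}\in\mathbb{R}^{n_y\times n_y}),$$ and symmetric matrices $Z_{p,\bm j}\in\mathbb{R}^{n_y\times n_y}$, such that for every $p,q\in\{1,2\}$ and every $\bm j\in\mathcal{J}_{n_y}$, $$\begin{bmatrix}\Gamma_{p,q,\bm j} & \Phi_{p,q,\bm j}\\ \Phi_{p,q,\bm j}^{\top} & \Xi_{q,\bm j}\end{bmatrix}\succ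 0,$$ where $N^+_{q,\bm j}:=N_{q,\bm j}+N_{q,\bm j}^{\top}$, $N^-_{q,\bm j}:=N_{q,\bm j}-N_{q,\bm j}^{\top}$, $$R_{q,\bm j}:=\begin{bmatrix} L_{q,\bm j}+M_{q,\bm j}+N^+_{q,\bm j} & L_{q,\bm j}-M_{q,\bm j}-N^-_{q,\bm j}\\ (L_{q,\bm j}-M_{q,\bm j}-N^-_{q,\bm j})^{\top} & L_{q,\bm j}+M_{q,\bm j}+Z_{q,\bm j}\end{bmatrix},$$ $\Gamma_{p,q,\bm j}:=\mathrm{diag}(\sigma^2P_p,\ \gamma^2 I_{n_w},\ N^+_{q,\bm j}+Z_{q,\bm j})$, $\Xi_{q,\bm j}:=\mathrm{diag}(P_q,\ I_{n_z},\ R_{q,\bm j})$, and $$\Phi_{p,q,\bm j}:=\begin{bmatrix} A+BK_pC & BK_pD & BK_p\\ F&0&0\\ \Delta_p\Lambda_{\bm j}C & \Delta_p\Lambda_{\bm j}D & 0\\ 0&0&I_{n_y}\end{bmatrix}^{\top}\Xi_{q,\bm j}.$$ Then: (i) the closed-loop system is practically stable with an ultimate bound of the form $\eta=\rho\cdot\max_{i=1,\dots,n_y}\big((\Delta_{\max}\lambda_i+1)\bar w\|D\|_\infty+\delta_i\big)$ for some $\rho\ge 0$, i.e., for every $\bar w\ge0$, $\|w[k]\|_\infty\le\bar w$ for all $k\in\mathbb{Z}_+$ implies $\limsup_{k\to\infty}\|x[k]\|\le\eta$; (ii) the closed-loop system has decay rate $\sigma$; and (iii) its $\ell^2$-gain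 from $w$ to $z$ is less than or equal to $\gamma$.
   Context: Plant (discrete time, $k\in\mathbb{Z}_+$): $x[k+1]=Ax[k]+Bu[k]$, $y[k]=Cx[k]+Dw[k]$, $z[k]=Fx[k]$, with $x[k]\in\mathbb{R}^{n_x}$, $u[k]\in\mathbb{R}^{n_u}$, $y[k]=[y_1[k],\dots,y_{n_y}[k]]^\top\in\mathbb{R}^{n_y}$, noise $w[k]\in\mathbb{R}^{n_w}$, performance output $z[k]\in\mathbb{R}^{n_z}$. Event-triggered try-once-discard protocol: fix $\Delta_{\max}>\Delta_{\min}\ge0$, $\lambda_i>0$, $\delta_i\ge0$ ($i=1,\dots,n_y$). Let $l^i_k$ be the latest time $\le k$ at which $y_i$ was transmitted (with some stored initial released value). At each $k$, compute $e_i'[k]:=y_i[l^i_{k-1}]-y_i[k]$ and $E_i':=\frac{|e_i'[k]|-\delta_i}{\lambda_i|y_i[k]|}$ (convention: $\alpha/0=+\infty$ for $\alpha>0$, $\beta/0=-\infty$ for $\beta\le0$). Rule: if $\max_iE_i'<\Delta_{\min}$, nothing is transmitted; if $\max_iE_i'\ge\Delta_{\max}$, all $y_i[k]$ with $E_i'\ge\Delta_{\max}$ are transmitted; otherwise a single $y_i[k]$ achieving $E_i'=\max_iE_i'$ is transmitted (any one if ties). If $y_i[k]$ is transmitted then $l^i_k=k$, otherwise $l^i_k=l^i_{k-1}$. Define $E[k]:=\Delta_{\min}$ if $\max_iE_i'<\Delta_{\min}$, $E[k]:=\Delta_{\max}$ if $\max_iE_i'\ge\Delta_{\max}$, and $E[k]:=\max_iE_i'$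 otherwise. Let $\tilde y[k]:=[y_1[l^1_k],\dots,y_{n_y}[l^{n_y}_k]]^\top$; the controller is $u[k]=K(E[k])\tilde y[k]$. Notation: $\|\cdot\|$ Euclidean norm; $\|v\|_\infty=\max_i|v_i|$ and $\|D\|_\infty$ is the induced matrix norm; $\mathcal{J}_n:=\{(j_1,\dots,j_n): j_p\in\{1,-1\}\}$; $\succ0$ means symmetric positive definite; $\ell^2$ is the space of square-summable sequences on $\mathbb{Z}_+$ with $\|v\|_{\ell^2}=(\sum_k v[k]^\top v[k])^{1/2}$. Definitions: the closed-loop system is practically stable if for every $\bar w\ge0$ there is $\eta\ge0$ with $\|w[k]\|_\infty\le\bar w\ \forall k\Rightarrow\limsup_{k\to\infty}\|x[k]\|\le\eta$. It has decay rate $\sigma$ if there is $M\ge1$ such that whenever $w[k]=0$ for all $k$ and $\delta_i=0$ for all $i$, $\|x[k]\|\le M\sigma^k\|x[0]\|$ for all $k\in\mathbb{Z}_+$. Its $\ell^2$-gain (for $w\in\ell^2$) is at most $\gamma$ if, whenever $x[0]=0$ and $\delta_i=0$ for all $i$, $z\in\ell^2$ and $\|z\|_{\ell^2}\le\gamma\|w\|_{\ell^2}$. *)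

From HB Require Import structures.
From mathcomp Require Import all_boot all_order all_algebra.
From mathcomp Require Import all_classical all_reals.
From mathcomp Require Import topology normedtype sequences.
Set Implicit Arguments. Unset Strict Implicit. Unset Printing Implicit Defensive.
Import Order.TTheory GRing.Theory Num.Theory.
Import numFieldNormedType.Exports.
Local Open Scope ring_scope.

Section Defs.
Variable R : realType.

Definition vnorm n (v : 'cV[R]_n) : R := Num.sqrt (\sum_i v i 0 ^+ 2).
Definition vnorm_inf n (v : 'cV[R]_n) : R := \big[Num.max/0]_i `|v i 0|.
Definition mnorm_inf m n (M : 'M[R]_(m, n)) : R :=
  \big[Num.max/0]_i \sum_j `|M i j|.

Definition posdef n (P : 'M[R]_n) : Prop :=
  P^T = P /\ forall v : 'cV[R]_n, v != 0 -> 0 < (v^T *m P *m v) 0 0.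

(* E'_i = (|e'_i| - delta_i) / (lambda_i |y_i|), with alpha/0 = +oo (alpha > 0),
   beta/0 = -oo (beta <= 0). *)
Definition Eprime (lam del e y : R) : \bar R :=
  if lam * `|y| != 0 then ((`|e| - del) / (lam * `|y|))%:E
  else if 0 < `|e| - del then +oo%E else -oo%E.

Definition Emax ny (Ep : 'I_ny -> \bar R) : \bar R := \big[maxe/-oo%E]_i Ep i.

Definition protocol_ok (Dmin Dmax : R) ny (Ep : 'I_ny -> \bar R)
    (S : {set 'I_ny}) : Prop :=
  [/\ (Emax Ep < Dmin%:E)%E -> S = finset.set0,
      (Dmax%:E <= Emax Ep)%E -> S = finset.finset (fun i => (Dmax%:E <= Ep i)%E) &
      (Dmin%:E <= Emax Ep)%E -> (Emax Ep < Dmax%:E)%E ->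
        exists i0, Ep i0 = Emax Ep /\ S = finset.set1 i0].

Definition Eval (Dmin Dmax : R) (m : \bar R) : R :=
  if (m < Dmin%:E)%E then Dmin else if (Dmax%:E <= m)%E then Dmax else fine m.

Definition gsK nu ny (Dmin Dmax : R) (K1 K2 : 'M[R]_(nu, ny)) (E : R) :=
  ((Dmax - E) / (Dmax - Dmin)) *: K1 + ((E - Dmin) / (Dmax - Dmin)) *: K2.

(* (x, w, yt) is a trajectory of the closed loop; yt k = tilde y[k] and
   yt0 is the stored initial released value (tilde y[-1]). *)
Definition closed_loop nx nu ny nw
    (A : 'M[R]_nx) (B : 'M[R]_(nx, nu)) (C : 'M[R]_(ny, nx)) (D : 'M[R]_(ny, nw))
    (K1 K2 : 'M[R]_(nu, ny)) (Dmin Dmax : R) (lam delta : 'I_ny -> R)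
    (x : nat -> 'cV[R]_nx) (w : nat -> 'cV[R]_nw) (yt : nat -> 'cV[R]_ny)
    (yt0 : 'cV[R]_ny) : Prop :=
  forall k : nat,
    let yprev := if k is k'.+1 then yt k' else yt0 in
    let y := C *m x k + D *m w k in
    let Ep := fun i => Eprime (lam i) (delta i) (yprev i 0 - y i 0) (y i 0) in
    exists S : {set 'I_ny},
      [/\ protocol_ok Dmin Dmax Ep S,
          forall i, yt k i 0 = (if i \in S then y i 0 else yprev i 0) &
          x k.+1 = A *m x k
                   + B *m (gsK Dmin Dmax K1 K2 (Eval Dmin Dmax (Emax Ep)) *m yt k)].

(* selection for p in {1,2} encoded as 'I_2 (0 ~ 1, 1 ~ 2) *)
Definition sel T (p : 'I_2) (a b : T) : T := if val p == 0%N then a else b.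

(* Lambda_j = diag(lambda_i j_i), j_i = 1 if j i, -1 otherwise *)
Definition Lambda ny (lam : 'I_ny -> R) (j : 'I_ny -> bool) : 'M[R]_ny :=
  diag_mx (\row_i (lam i * (if j i then 1 else -1))).

Definition diag3 n1 n2 n3 (M1 : 'M[R]_n1) (M2 : 'M[R]_n2) (M3 : 'M[R]_n3)
  : 'M[R]_(n1 + (n2 + n3)) := block_mx M1 0 0 (block_mx M2 0 0 M3).

Section LMI.
Variables (nx nu ny nw nz : nat).
Variables (A : 'M[R]_nx) (B : 'M[R]_(nx, nu)) (C : 'M[R]_(ny, nx))
  (D : 'M[R]_(ny, nw)) (F : 'M[R]_(nz, nx)) (Kp : 'M[R]_(nu, ny))
  (Dp sigma gamma : R) (Lam : 'M[R]_ny) (Pp Pq : 'M[R]_nx) (Lq Mq Nq Zq : 'M[R]_ny).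

Definition Nplus : 'M[R]_ny := Nq + Nq^T.
Definition Nminus : 'M[R]_ny := Nq - Nq^T.
Definition Rmat : 'M[R]_(ny + ny) :=
  block_mx (Lq + Mq + Nplus) (Lq - Mq - Nminus) (Lq - Mq - Nminus)^T (Lq + Mq + Zq).
Definition Gam : 'M[R]_(nx + (nw + ny)) :=
  diag3 (sigma ^+ 2 *: Pp) (gamma ^+ 2 *: (1%:M : 'M[R]_nw)) (Nplus + Zq).
Definition Xi : 'M[R]_(nx + (nz + (ny + ny))) :=
  diag3 Pq (1%:M : 'M[R]_nz) Rmat.
Definition Gmat_row1 : 'M[R]_(nx, nx + (nw + ny)) :=
  row_mx (A + B *m Kp *m C) (row_mx (B *m Kp *m D) (B *m Kp)).
Definition Gmat_row2 : 'M[R]_(nz, nx + (nw + ny)) :=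
  row_mx F (row_mx (0 : 'M[R]_(nz, nw)) (0 : 'M[R]_(nz, ny))).
Definition Gmat_row3 : 'M[R]_(ny, nx + (nw + ny)) :=
  row_mx (Dp *: (Lam *m C)) (row_mx (Dp *: (Lam *m D)) (0 : 'M[R]_ny)).
Definition Gmat_row4 : 'M[R]_(ny, nx + (nw + ny)) :=
  row_mx (0 : 'M[R]_(ny, nx)) (row_mx (0 : 'M[R]_(ny, nw)) (1%:M : 'M[R]_ny)).
Definition Gmat : 'M[R]_(nx + (nz + (ny + ny)), nx + (nw + ny)) :=
  col_mx Gmat_row1 (col_mx Gmat_row2 (col_mx Gmat_row3 Gmat_row4)).
Definition Phi : 'M[R]_(nx + (nw + ny), nx + (nz + (ny + ny))) := Gmat^T *m Xi.
Definition lmi_mat : 'M[R]_((nx + (nw + ny)) + (nx + (nz + (ny + ny)))) :=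
  block_mx Gam Phi Phi^T Xi.
End LMI.

End Defs.

From HB Require Import structures.
From mathcomp Require Import all_boot all_order all_algebra.
From mathcomp Require Import all_classical all_reals.
From mathcomp Require Import topology normedtype sequences.
From mathcomp Require Import ring lra.
Import Order.TTheory GRing.Theory Num.Theory.
Import numFieldNormedType.Exports.
Set Implicit Arguments. Unset Strict Implicit. Unset Printing Implicit Defensive.
Local Open Scope ring_scope.

(* V(x) = max (x' P_1 x, x' P_2 x) is a common Lyapunov function. At step k the
   protocol yields E[k] in [Delta_1, Delta_2] with |ytilde_i - y_i| <= E[k] lambda_i |y_i|
   + delta_i (zero error for transmitted outputs), and the weights alpha_1, alpha_2 of
   K(E[k]) also satisfy alpha_1 Delta_1 + alpha_2 Delta_2 = E[k], so the closed-loop map is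
   the alpha-combination of the two LMI vertices. The Schur complements of the strict LMIs
   for p = 1, 2, combined by convexity of the form of Xi_q, together with an S-procedure
   term built from the nonnegative matrix [L N; N' M] and a Lambda_j matching the signs of
   y, give for q = 1, 2
     x+' P_q x+ + |z|^2 <= sigma^2 V(x) + gamma^2 |w|^2 - mu |(x, w, ytilde - y)|^2
                            + 2 m U W,
   with mu > 0 a common coercivity margin of the LMIs, m >= max_i delta_i, U a bound on
   the entries of (E[k] Lambda_j y, ytilde - y) and W a bound on the sums of absolute
   entries of the S-procedure matrices. For delta = 0 this gives the decay rate (w = 0)
   and, summed over k, the l2 gain. In general, absorbing D w into the
   transmission error and applying Young's inequality give
   V(x+) <= (1 - theta) V(x) + K max_i ((Delta_max lambda_i + 1) wbar |D| + delta_i)^2,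
   whence the ultimate bound. *)

Section QuadraticForms.
Variable R : realType.

Definition bform m n (M : 'M[R]_(m, n)) (u : 'cV[R]_m) (v : 'cV[R]_n) : R :=
  (u^T *m M *m v) 0 0.
Definition qform n (M : 'M[R]_n) (v : 'cV[R]_n) : R := bform M v v.
Definition sqnorm n (v : 'cV[R]_n) : R := \sum_i v i 0 ^+ 2.
Definition abssum m n (M : 'M[R]_(m, n)) : R := \sum_i \sum_j `|M i j|.

Lemma bformE m n (M : 'M[R]_(m, n)) u v :
  bform M u v = \sum_i \sum_j u i 0 * M i j * v j 0.
Proof.
rewrite /bform mxE exchange_big; apply: eq_bigr => j _.
by rewrite mxE big_distrl; apply: eq_bigr => i _; rewrite !mxE.
Qed.

Lemma bformDm m n (M1 M2 : 'M[R]_(m, n)) u v :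
  bform (M1 + M2) u v = bform M1 u v + bform M2 u v.
Proof. by rewrite /bform mulmxDr mulmxDl !mxE. Qed.

Lemma bformBm m n (M1 M2 : 'M[R]_(m, n)) u v :
  bform (M1 - M2) u v = bform M1 u v - bform M2 u v.
Proof. by rewrite /bform mulmxBr mulmxBl !mxE. Qed.

Lemma bformZm m n (c : R) (M : 'M[R]_(m, n)) u v :
  bform (c *: M) u v = c * bform M u v.
Proof. by rewrite /bform -scalemxAr -scalemxAl !mxE. Qed.

Lemma bformNm m n (M : 'M[R]_(m, n)) u v : bform (- M) u v = - bform M u v.
Proof. by rewrite -scaleN1r bformZm mulN1r. Qed.

Lemma bform0m m n u v : bform (0 : 'M[R]_(m, n)) u v = 0.
Proof. by rewrite /bform mulmx0 mul0mx mxE. Qed.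

Lemma bformDu m n (M : 'M[R]_(m, n)) u1 u2 v :
  bform M (u1 + u2) v = bform M u1 v + bform M u2 v.
Proof. by rewrite /bform linearD /= !mulmxDl !mxE. Qed.

Lemma bformBu m n (M : 'M[R]_(m, n)) u1 u2 v :
  bform M (u1 - u2) v = bform M u1 v - bform M u2 v.
Proof. by rewrite /bform linearB /= !mulmxBl !mxE. Qed.

Lemma bformZu m n (M : 'M[R]_(m, n)) (c : R) u v :
  bform M (c *: u) v = c * bform M u v.
Proof. by rewrite /bform linearZ /= -!scalemxAl !mxE. Qed.

Lemma bformNu m n (M : 'M[R]_(m, n)) u v : bform M (- u) v = - bform M u v.
Proof. by rewrite -scaleN1r bformZu mulN1r. Qed.

Lemma bform0u m n (M : 'M[R]_(m, n)) v : bform M 0 v = 0.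
Proof. by rewrite /bform linear0 !mul0mx mxE. Qed.

Lemma bformDv m n (M : 'M[R]_(m, n)) u v1 v2 :
  bform M u (v1 + v2) = bform M u v1 + bform M u v2.
Proof. by rewrite /bform mulmxDr !mxE. Qed.

Lemma bformBv m n (M : 'M[R]_(m, n)) u v1 v2 :
  bform M u (v1 - v2) = bform M u v1 - bform M u v2.
Proof. by rewrite /bform mulmxBr !mxE. Qed.

Lemma bformZv m n (M : 'M[R]_(m, n)) (c : R) u v :
  bform M u (c *: v) = c * bform M u v.
Proof. by rewrite /bform -scalemxAr !mxE. Qed.

Lemma bformNv m n (M : 'M[R]_(m, n)) u v : bform M u (- v) = - bform M u v.
Proof. by rewrite -scaleN1r bformZv mulN1r. Qed.

Lemma bform0v m n (M : 'M[R]_(m, n)) u : bform M u 0 = 0.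
Proof. by rewrite /bform mulmx0 mxE. Qed.

Lemma bform_tr m n (M : 'M[R]_(m, n)) u v : bform M^T u v = bform M v u.
Proof.
rewrite !bformE exchange_big; apply: eq_bigr => i _; apply: eq_bigr => j _.
by rewrite mxE; ring.
Qed.

Lemma bform_mull m n p (G : 'M[R]_(m, n)) (M : 'M[R]_(n, p)) u v :
  bform (G *m M) u v = bform M (G^T *m u) v.
Proof. by rewrite /bform trmx_mul trmxK !mulmxA. Qed.

Lemma bform_row1 n (X : 'M[R]_(1, n)) (t : 'cV[R]_1) v :
  bform X t v = t 0 0 * (X *m v) 0 0.
Proof. by rewrite /bform -mulmxA mxE big_ord1 mxE. Qed.

Lemma bform_block m1 m2 n1 n2 (A : 'M[R]_(m1, n1)) (B : 'M[R]_(m1, n2))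
    (C : 'M[R]_(m2, n1)) (D : 'M[R]_(m2, n2)) u1 u2 v1 v2 :
  bform (block_mx A B C D) (col_mx u1 u2) (col_mx v1 v2) =
  bform A u1 v1 + bform B u1 v2 + bform C u2 v1 + bform D u2 v2.
Proof. by rewrite /bform tr_col_mx mul_row_block mul_row_col !mulmxDl !mxE; ring. Qed.

Lemma qform0 n (M : 'M[R]_n) : qform M 0 = 0.
Proof. exact: bform0u. Qed.

Lemma qformZ n (c : R) (M : 'M[R]_n) v : qform (c *: M) v = c * qform M v.
Proof. exact: bformZm. Qed.

Lemma qform1 n (v : 'cV[R]_n) : qform 1%:M v = sqnorm v.
Proof. by rewrite /qform /bform mulmx1 mxE; apply: eq_bigr => i _; rewrite mxE expr2. Qed.

Lemma qform_trmx_row n (X : 'M[R]_(1, n)) v : qform (X^T *m X) v = (X *m v) 0 0 ^+ 2.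
Proof. by rewrite /qform bform_mull trmxK bform_row1 expr2. Qed.

Lemma qform_diag3 n1 n2 n3 (M1 : 'M[R]_n1) (M2 : 'M[R]_n2) (M3 : 'M[R]_n3) a b c :
  qform (diag3 M1 M2 M3) (col_mx a (col_mx b c)) = qform M1 a + qform M2 b + qform M3 c.
Proof. by rewrite /qform /diag3 !bform_block !bform0m; ring. Qed.

Lemma qform_schur m k (Ga : 'M[R]_m) (G : 'M[R]_(k, m)) (X : 'M[R]_k) xi :
  qform (block_mx Ga (G^T *m X) (G^T *m X)^T X) (col_mx xi (- (G *m xi))) =
  qform Ga xi - qform X (G *m xi).
Proof. by rewrite /qform bform_block bform_tr !bform_mull trmxK !bformNu !bformNv opprK; ring. Qed.

Lemma qform_convex n (X : 'M[R]_n) (a1 a2 : R) u v :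
  (forall v, 0 <= qform X v) -> 0 <= a1 -> 0 <= a2 -> a1 + a2 = 1 ->
  qform X (a1 *: u + a2 *: v) <= a1 * qform X u + a2 * qform X v.
Proof.
move=> HX h1 h2 h12.
have E : a1 * qform X u + a2 * qform X v - qform X (a1 *: u + a2 *: v) =
         a1 * a2 * qform X (u - v).
  rewrite /qform !(bformDu, bformDv, bformBu, bformBv, bformZu, bformZv, bformNu, bformNv).
  have -> : a2 = 1 - a1 by rewrite -h12; ring.
  ring.
have : 0 <= a1 * a2 * qform X (u - v) by rewrite !mulr_ge0.
by rewrite -E subr_ge0.
Qed.

Lemma sqnorm_ge0 n (v : 'cV[R]_n) : 0 <= sqnorm v.
Proof. by apply: sumr_ge0 => i _; rewrite sqr_ge0. Qed.

Lemma sqnorm0 n : sqnorm (0 : 'cV[R]_n) = 0.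
Proof. by rewrite /sqnorm big1 // => i _; rewrite mxE expr0n. Qed.

Lemma sqnorm1 (t : 'cV[R]_1) : sqnorm t = t 0 0 ^+ 2.
Proof. by rewrite /sqnorm big_ord1. Qed.

Lemma sqnorm_col_mx m n (u : 'cV[R]_m) (v : 'cV[R]_n) :
  sqnorm (col_mx u v) = sqnorm u + sqnorm v.
Proof.
by rewrite /sqnorm big_split_ord; congr (_ + _); apply: eq_bigr => i _;
  rewrite ?col_mxEu ?col_mxEd.
Qed.

Lemma ler_term_sum (I : finType) (f : I -> R) i :
  (forall j, 0 <= f j) -> f i <= \sum_j f j.
Proof. by move=> H; rewrite (bigD1 i) //= lerDl; apply: sumr_ge0. Qed.

Lemma vnorm_sqr n (v : 'cV[R]_n) : vnorm v ^+ 2 = sqnorm v.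
Proof. by rewrite /vnorm sqr_sqrtr // sqnorm_ge0. Qed.

Lemma vnorm_ge0 n (v : 'cV[R]_n) : 0 <= vnorm v.
Proof. exact: sqrtr_ge0. Qed.

Lemma coord_le_vnorm n (v : 'cV[R]_n) i : `|v i 0| <= vnorm v.
Proof.
rewrite -(ler_pXn2r (_ : 0 < 2)%N) ?nnegrE ?vnorm_ge0 //.
by rewrite real_normK ?num_real // vnorm_sqr; apply: ler_term_sum => j; rewrite sqr_ge0.
Qed.

Lemma abssum_ge0 m n (M : 'M[R]_(m, n)) : 0 <= abssum M.
Proof. by apply: sumr_ge0 => i _; apply: sumr_ge0. Qed.

Lemma coord_mulmx_le m n (M : 'M[R]_(m, n)) (v : 'cV[R]_n) i :
  `|(M *m v) i 0| <= abssum M * vnorm v.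
Proof.
rewrite mxE; apply: le_trans (ler_norm_sum _ _ _) _.
apply: le_trans (_ : \sum_j `|M i j| * vnorm v <= _).
  by apply: ler_sum => j _; rewrite normrM; apply: ler_wpM2l; last exact: coord_le_vnorm.
rewrite -mulr_suml; apply: ler_wpM2r; first exact: vnorm_ge0.
by rewrite /abssum (bigD1 i) //= lerDl; apply: sumr_ge0 => k _; apply: sumr_ge0.
Qed.

Lemma coord_mulmx_le_inf m n (M : 'M[R]_(m, n)) (v : 'cV[R]_n) i :
  `|(M *m v) i 0| <= mnorm_inf M * vnorm_inf v.
Proof.
rewrite mxE; apply: le_trans (ler_norm_sum _ _ _) _.
apply: le_trans (_ : \sum_j `|M i j| * vnorm_inf v <= _).
  by apply: ler_sum => j _; rewrite normrM; apply: ler_wpM2l; last exact: (le_bigmax _ (fun j => `|v j 0|)).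
rewrite -mulr_suml; apply: ler_wpM2r; first exact: bigmax_ge_id.
exact: (le_bigmax _ (fun i => \sum_j `|M i j|)).
Qed.

Lemma qform_le_abssum n (M : 'M[R]_n) v : qform M v <= abssum M * sqnorm v.
Proof.
rewrite /qform bformE /abssum big_distrl /=; apply: ler_sum => i _.
rewrite big_distrl /=; apply: ler_sum => j _.
have hi : v i 0 ^+ 2 <= sqnorm v by apply: ler_term_sum => k; rewrite sqr_ge0.
have hj : v j 0 ^+ 2 <= sqnorm v by apply: ler_term_sum => k; rewrite sqr_ge0.
have hij : `|v i 0 * v j 0| <= sqnorm v.
  rewrite normrM; have := sqr_ge0 (`|v i 0| - `|v j 0|).
  by rewrite sqrrB !real_normK ?num_real //; lra.
rewrite (_ : v i 0 * M i j * v j 0 = M i j * (v i 0 * v j 0)); last by ring.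
by apply: le_trans (ler_norm _) _; rewrite normrM; apply: ler_wpM2l.
Qed.

Lemma mulr_ge_NmU (a b m U : R) : 0 <= m -> - m <= a -> - m <= b ->
  `|a| <= U -> `|b| <= U -> - (m * U) <= a * b.
Proof.
move=> hm ha hb haU hbU; have na := ler_norm a; have nb := ler_norm b.
have hmU : 0 <= m * U by rewrite mulr_ge0 // (le_trans (normr_ge0 a)).
case: (lerP 0 a) => sa; case: (lerP 0 b) => sb.
- have : 0 <= a * b by rewrite mulr_ge0.
  lra.
- have h : a * (- b) <= U * m by apply: ler_pM => //; lra.
  rewrite mulrN mulrC in h; lra.
- have h : (- a) * b <= m * U by apply: ler_pM => //; lra.
  rewrite mulNr in h; lra.
- have : 0 <= a * b by rewrite nmulr_rge0 // ltW.
  lra.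
Qed.

Lemma qform_nneg_lb k (W : 'M[R]_k) (u : 'cV[R]_k) (m U : R) :
  (forall a b, 0 <= W a b) -> 0 <= m ->
  (forall i, - m <= u i 0) -> (forall i, `|u i 0| <= U) ->
  - (2 * m * U * abssum W) <= qform W u.
Proof.
move=> HW hm Hl Hu.
rewrite /qform bformE /abssum mulr_sumr -sumrN; apply: ler_sum => i _.
rewrite mulr_sumr -sumrN; apply: ler_sum => j _.
rewrite ger0_norm //.
have h := ler_wpM2l (HW i j) (mulr_ge_NmU hm (Hl i) (Hl j) (Hu i) (Hu j)).
have : 0 <= m * U * W i j.
  by rewrite !mulr_ge0 // (le_trans (normr_ge0 (u i 0))).
lra.
Qed.

Lemma col_mx_forall m n (Q : R -> Prop) (u : 'cV[R]_m) (v : 'cV[R]_n) :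
  (forall i, Q (u i 0)) -> (forall i, Q (v i 0)) -> forall k, Q (col_mx u v k 0).
Proof.
move=> hu hv k; rewrite -[k]fintype.splitK; case: (fintype.split k) => i /=.
  by rewrite col_mxEu.
by rewrite col_mxEd.
Qed.

End QuadraticForms.

Section Coercivity.
Variable R : realType.

Definition schur1 n (M : 'M[R]_(1 + n)) : 'M[R]_n :=
  drsubmx M - (ulsubmx M 0 0)^-1 *: ((ursubmx M)^T *m ursubmx M).

Lemma qform_block1 n (M : 'M[R]_(1 + n)) (t : 'cV[R]_1) (u : 'cV[R]_n) :
  M^T = M ->
  qform M (col_mx t u) = ulsubmx M 0 0 * t 0 0 ^+ 2
    + 2 * t 0 0 * (ursubmx M *m u) 0 0 + qform (drsubmx M) u.
Proof.
move=> hM; rewrite /qform -{1}[M]submxK bform_block.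
have -> : dlsubmx M = (ursubmx M)^T by rewrite trmx_ursub hM.
by rewrite bform_tr !bform_row1 [(ulsubmx M *m t) 0 0]mxE big_ord1; ring.
Qed.

Lemma qform_schur1 n (M : 'M[R]_(1 + n)) u :
  qform (schur1 M) u =
  qform (drsubmx M) u - (ulsubmx M 0 0)^-1 * (ursubmx M *m u) 0 0 ^+ 2.
Proof. by rewrite /schur1 /qform bformBm bformZm -qform_trmx_row. Qed.

Lemma qform_block1_schur n (M : 'M[R]_(1 + n)) (t : 'cV[R]_1) (u : 'cV[R]_n) :
  M^T = M -> ulsubmx M 0 0 != 0 ->
  qform M (col_mx t u) = ulsubmx M 0 0 *
    (t 0 0 + (ursubmx M *m u) 0 0 / ulsubmx M 0 0) ^+ 2 + qform (schur1 M) u.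
Proof.
by move=> hM ha; rewrite qform_block1 // qform_schur1; field.
Qed.

Lemma posdef_ulsub_gt0 n (M : 'M[R]_(1 + n)) : posdef M -> 0 < ulsubmx M 0 0.
Proof.
move=> [hM hMp]; have := hMp (col_mx 1%:M 0).
rewrite col_mx_eq0 negb_and oner_eq0 => /(_ isT).
rewrite -/(bform _ _ _) -/(qform _ _) qform_block1 // qform0 mulmx0 !mxE /=.
by rewrite expr1n mulr1 mulr0 !addr0.
Qed.

Lemma posdef_schur1 n (M : 'M[R]_(1 + n)) : posdef M -> posdef (schur1 M).
Proof.
move=> HM; have [hM hMp] := HM; have ha := posdef_ulsub_gt0 HM.
split; first by rewrite /schur1 linearB /= linearZ /= trmx_mul trmxK trmx_drsub hM.
move=> u hu; set x := (ursubmx M *m u) 0 0.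
set t : 'cV[R]_1 := (- x / ulsubmx M 0 0)%:M.
have t00 : t 0 0 = - x / ulsubmx M 0 0 by rewrite mxE eqxx mulr1n.
have := hMp (col_mx t u); rewrite col_mx_eq0 negb_and hu orbT => /(_ isT).
rewrite -/(bform _ _ _) -/(qform _ _) qform_block1_schur ?gt_eqF // t00 -/x.
have -> : - x / ulsubmx M 0 0 + x / ulsubmx M 0 0 = 0 by rewrite mulNr addNr.
by rewrite expr2 !mul0r mulr0 add0r.
Qed.

(* Completing the square: with [s = t + (b u) / a], [t^2 <= 2 s^2 + 2 (b u)^2 / a^2]. *)
Lemma coercive_schur1 n (M : 'M[R]_(1 + n)) e : posdef M -> 0 < e ->
  (forall u, e * sqnorm u <= qform (schur1 M) u) ->
  exists2 c, 0 < c & forall v, c * sqnorm v <= qform M v.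
Proof.
move=> HM he He; have [hM _] := HM; have ha := posdef_ulsub_gt0 HM.
set a := ulsubmx M 0 0 in ha; set b := ursubmx M.
set K := abssum (b^T *m b); have hK : 0 <= K by exact: abssum_ge0.
set c1 := 2 / a; set c2 := (1 + 2 * K / a ^+ 2) / e.
have hc1 : 0 < c1 by rewrite divr_gt0.
have hc2 : 0 < c2.
  by rewrite divr_gt0 // ltr_wpDr // !mulr_ge0 // invr_ge0 exprn_ge0 // ltW.
exists (c1 + c2)^-1; first by rewrite invr_gt0 addr_gt0.
move=> v; rewrite -[v]vsubmxK qform_block1_schur ?gt_eqF // sqnorm_col_mx sqnorm1 -/a -/b.
set t := usubmx v 0 0; set u := dsubmx v; set s := t + (b *m u) 0 0 / a.
have hu := sqnorm_ge0 u; have hs := sqr_ge0 s; have HSu := He u.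
have ht : t ^+ 2 <= 2 * s ^+ 2 + 2 * (K * sqnorm u / a ^+ 2).
  have -> : t = s - (b *m u) 0 0 / a by rewrite /s; ring.
  have h1 := sqr_ge0 (s + (b *m u) 0 0 / a).
  have h2 : ((b *m u) 0 0 / a) ^+ 2 <= K * sqnorm u / a ^+ 2.
    rewrite expr_div_n ler_pM2r ?invr_gt0 ?exprn_gt0 //.
    by rewrite -qform_trmx_row qform_le_abssum.
  rewrite sqrrB; rewrite sqrrD in h1; lra.
have E1 : c1 * (a * s ^+ 2) = 2 * s ^+ 2 by rewrite /c1; field; rewrite gt_eqF.
have E2 : c2 * (e * sqnorm u) = sqnorm u + 2 * (K * sqnorm u / a ^+ 2).
  by rewrite /c2; field; rewrite (gt_eqF ha) (gt_eqF he).
have E3 := mulr_ge0 (ltW hc1) (mulr_ge0 (ltW he) hu).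
have E4 := mulr_ge0 (ltW hc2) (mulr_ge0 (ltW ha) hs).
rewrite ler_pdivrMl ?addr_gt0 //.
apply: le_trans (_ : (c1 + c2) * (a * s ^+ 2 + e * sqnorm u) <= _).
  by rewrite mulrDl !mulrDr E1 E2; lra.
by rewrite ler_pM2l ?addr_gt0 // lerD2l.
Qed.

Lemma posdef_coercive n (M : 'M[R]_n) :
  posdef M -> exists2 c, 0 < c & forall v, c * sqnorm v <= qform M v.
Proof.
elim: n M => [|n IH] M HM.
  by exists 1 => // v; rewrite /sqnorm /qform bformE !big_ord0 mulr0.
have [e he He] := IH _ (posdef_schur1 HM).
exact: coercive_schur1 HM he He.
Qed.

End Coercivity.

Section RealSequences.
Variable R : realType.

Lemma dissipation_l2_gain (v z w : nat -> R) (g : R) :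
  0 <= g -> v 0%N = 0 -> (forall k, 0 <= v k) ->
  (forall k, 0 <= z k) -> (forall k, 0 <= w k) ->
  (forall k, v k.+1 + z k <= v k + g ^+ 2 * w k) ->
  cvgn (series w) ->
  cvgn (series z) /\ Num.sqrt (limn (series z)) <= g * Num.sqrt (limn (series w)).
Proof.
move=> hg hv0 hv hz hw hstep hcw.
have series0 (u : nat -> R) : series u 0 = 0 by rewrite seriesEnat /= big_geq.
have hsum n : series z n + v n <= g ^+ 2 * series w n.
  elim: n => [|n IH]; first by rewrite !series0 hv0 mulr0 addr0.
  by rewrite !seriesSr; have := hstep n; lra.
have series_homo (u : nat -> R) : (forall n, 0 <= u n) ->
    {homo series u : n m / (n <= m)%N >-> n <= m}.
  by move=> hu; rewrite seriesEnat; apply: nondecreasing_series => n _ _.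
have hwle := nondecreasing_cvgn_le (series_homo w hw) hcw.
have hg2 : 0 <= g ^+ 2 by rewrite exprn_ge0.
have hzle n : series z n <= g ^+ 2 * limn (series w).
  have := ler_wpM2l hg2 (hwle n); have := hsum n; have := hv n; lra.
have hcz : cvgn (series z).
  apply: nondecreasing_is_cvgn; first exact: series_homo z hz.
  by exists (g ^+ 2 * limn (series w)) => _ [n _ <-]; exact: hzle.
split => //.
have hlz : limn (series z) <= g ^+ 2 * limn (series w).
  by apply: limr_le => //; apply: nearW.
have hlw : 0 <= limn (series w) by have := hwle 0%N; rewrite series0.
apply: le_trans (_ : Num.sqrt (g ^+ 2 * limn (series w)) <= _).
  by rewrite ler_sqrt // mulr_ge0.
by rewrite sqrtrM // sqrtr_sqr ger0_norm.
Qed.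

Lemma geometric_eventually_le (a v0 e : R) :
  0 <= a < 1 -> 0 <= v0 -> 0 < e ->
  exists K0, forall k, (K0 <= k)%N -> a ^+ k * v0 <= e.
Proof.
move=> /andP[a0 a1] hv he.
have hv1 : 0 < v0 + 1 by lra.
have := cvg_expr (_ : `|a| < 1); rewrite ger0_norm // => /(_ a1).
move=> /cvgrPdist_le /(_ (e / (v0 + 1)) (divr_gt0 he hv1)) [N _ HN].
exists N => k /HN /=; rewrite sub0r normrN ger0_norm ?exprn_ge0 //.
rewrite ler_pdivlMr // => h; apply: le_trans (_ : a ^+ k * (v0 + 1) <= e) => //.
by rewrite ler_wpM2l ?exprn_ge0 //; lra.
Qed.

Lemma contraction_eventually_le (v : nat -> R) (th c e : R) :
  0 < th <= 1 -> 0 <= c -> 0 < e -> (forall k, 0 <= v k) ->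
  (forall k, v k.+1 <= (1 - th) * v k + c) ->
  exists K0, forall k, (K0 <= k)%N -> v k <= e + c / th.
Proof.
move=> /andP[th0 th1] hc he hv hstep.
have hth : 0 <= 1 - th by lra.
have hvk k : v k <= (1 - th) ^+ k * v 0%N + c / th.
  elim: k => [|k IH]; first by rewrite expr0 mul1r lerDl divr_ge0 // ltW.
  apply: le_trans (hstep k) _.
  have -> : (1 - th) ^+ k.+1 * v 0%N + c / th =
            (1 - th) * ((1 - th) ^+ k * v 0%N + c / th) + c.
    by rewrite exprS; field; rewrite gt_eqF.
  by rewrite lerD2r; apply: ler_wpM2l.
have [|K0 HK0] := geometric_eventually_le (a := 1 - th) _ (hv 0%N) he.
  by apply/andP; split; lra.
by exists K0 => k /HK0 hk; apply: le_trans (hvk k) _; rewrite lerD2r.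
Qed.

End RealSequences.

Section ScalarInequalities.
Variable R : realType.

Lemma young (e c t : R) : 0 < e -> 2 * c * t - e * t ^+ 2 <= c ^+ 2 / e.
Proof.
move=> he; have : 0 <= (e * t - c) ^+ 2 / e by rewrite divr_ge0 ?sqr_ge0 // ltW.
have -> : (e * t - c) ^+ 2 / e = c ^+ 2 / e - (2 * c * t - e * t ^+ 2).
  by field; rewrite gt_eqF.
by rewrite subr_ge0.
Qed.

Lemma le_sqrt_sum (n a b : R) : 0 <= n -> 0 <= a -> 0 <= b ->
  n ^+ 2 <= a ^+ 2 + b ^+ 2 -> n <= a + b.
Proof.
move=> hn ha hb h.
rewrite -(ler_pXn2r (_ : 0 < 2)%N) ?nnegrE ?addr_ge0 // sqrrD.
by have := mulr_ge0 ha hb; lra.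
Qed.

Lemma convex2_le (a1 a2 g1 g2 t : R) : 0 <= a1 -> 0 <= a2 -> a1 + a2 = 1 ->
  g1 <= t -> g2 <= t -> a1 * g1 + a2 * g2 <= t.
Proof.
move=> h1 h2 h12 t1 t2; have k1 := ler_wpM2l h1 t1; have k2 := ler_wpM2l h2 t2.
by rewrite -[t]mul1r -h12 mulrDl; lra.
Qed.

Lemma convex2_ge (a1 a2 g1 g2 t : R) : 0 <= a1 -> 0 <= a2 -> a1 + a2 = 1 ->
  t <= g1 -> t <= g2 -> t <= a1 * g1 + a2 * g2.
Proof.
move=> h1 h2 h12 t1 t2; have k1 := ler_wpM2l h1 t1; have k2 := ler_wpM2l h2 t2.
by rewrite -[t]mul1r -h12 mulrDl; lra.
Qed.

Lemma trigger_bound_absorb (E l Dm c d z0 dl b : R) :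
  0 <= E -> E <= Dm -> 0 <= l -> `|d| <= b ->
  `|z0 - (c + d)| <= E * (l * `|c + d|) + dl ->
  `|z0 - c| <= E * (l * `|c|) + ((Dm * l + 1) * b + dl).
Proof.
move=> hE0 hE hl hd hb.
have hz : `|z0 - c| <= `|z0 - (c + d)| + `|d|.
  by rewrite (_ : z0 - c = z0 - (c + d) + d) ?ler_normD //; ring.
have hEl : 0 <= E * l := mulr_ge0 hE0 hl.
have hEd : E * l * `|d| <= Dm * l * b := ler_pM hEl (normr_ge0 d) (ler_wpM2r hl hE) hd.
have hcd : E * (l * `|c + d|) <= E * l * `|c| + E * l * `|d|.
  by rewrite !mulrA -mulrDr; apply: ler_wpM2l => //; exact: ler_normD.
lra.
Qed.

End ScalarInequalities.

Section Protocol.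
Variable R : realType.
Local Open Scope ereal_scope.

Lemma Eprime_le (lam del e y E : R) : (0 < lam)%R -> (0 <= del)%R -> (0 <= E)%R ->
  Eprime lam del e y <= E%:E -> (`|e| <= E * (lam * `|y|) + del)%R.
Proof.
move=> hl hd hE; rewrite /Eprime.
case: ifP => [hne|/negbFE/eqP h0].
  have hp : (0 < lam * `|y|)%R by rewrite lt_def hne mulr_ge0 // ltW.
  by rewrite lee_fin ler_pdivrMr // => h; rewrite -lerBlDr; lra.
case: ifP => [_|/negbT]; first by [].
by rewrite -leNgt h0 mulr0 add0r => h _; rewrite -subr_le0; lra.
Qed.

Lemma le_Emax ny (Ep : 'I_ny -> \bar R) i : Ep i <= Emax Ep.
Proof. by rewrite /Emax (bigD1 i) //= le_max lexx. Qed.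

Lemma Eval_itv (Dmin Dmax : R) m : (Dmin <= Dmax)%R ->
  (Dmin <= Eval Dmin Dmax m <= Dmax)%R.
Proof.
move=> h; rewrite /Eval.
case: ifP => [_|/negbT h1]; first by rewrite lexx h.
case: ifP => [_|/negbT h2]; first by rewrite h lexx.
rewrite -leNgt in h1; rewrite -ltNge in h2.
by move: h1 h2; case: m => [r| |] //=; rewrite ?lee_fin ?lte_fin => h1 h2; rewrite h1 ltW.
Qed.

Lemma protocol_unsent_le (Dmin Dmax : R) ny (Ep : 'I_ny -> \bar R) S :
  (Dmin < Dmax)%R -> protocol_ok Dmin Dmax Ep S ->
  forall i, i \notin S -> Ep i <= (Eval Dmin Dmax (Emax Ep))%:E.
Proof.
move=> hD [H1 H2 H3] i hi; have hge := le_Emax Ep i.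
rewrite /Eval; case: ifP => [h|/negbT h1]; first exact: le_trans hge (ltW h).
case: ifP => [h|/negbT h2].
  by move: hi; rewrite (H2 h) inE -ltNge => /ltW.
rewrite -leNgt in h1; rewrite -ltNge in h2.
by apply: le_trans hge _; move: h1 h2; case: (Emax Ep) => [r| |].
Qed.

End Protocol.

Section LMIAlgebra.
Variable R : realType.

Lemma qform_Rmat n (L M N Z : 'M[R]_n) a e : L^T = L -> M^T = M ->
  qform (Rmat L M N Z) (col_mx a e) =
  qform (block_mx L N N^T M) (col_mx (a + e) (a - e)) + qform (Nplus N + Z) e.
Proof.
move=> hL hM.
have sL u v : bform L u v = bform L v u by rewrite -{1}hL bform_tr.
have sM u v : bform M u v = bform M v u by rewrite -{1}hM bform_tr.
rewrite /qform /Rmat /Nplus /Nminus !bform_block bform_tr.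
rewrite !(bformDm, bformBm, bformNm, bformDu, bformBu, bformDv, bformBv, bformNu,
  bformNv, bform_tr).
by rewrite (sL e a) (sM e a); ring.
Qed.

Lemma sel_ord0 T (a b : T) : sel ord0 a b = a.
Proof. by []. Qed.

Lemma sel_ord_max T (a b : T) : sel ord_max a b = b.
Proof. by []. Qed.

End LMIAlgebra.

Section ClosedLoop.
Variable R : realType.
Variables (nx nu ny nw nz : nat).
Variables (A : 'M[R]_nx) (B : 'M[R]_(nx, nu)) (C : 'M[R]_(ny, nx))
  (D : 'M[R]_(ny, nw)) (F : 'M[R]_(nz, nx)) (K1 K2 : 'M[R]_(nu, ny))
  (Dmin Dmax : R) (lam : 'I_ny -> R).
Hypotheses (hDmin : 0 <= Dmin) (hD : Dmin < Dmax) (hlam : forall i, 0 < lam i).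

Lemma Gmat_mul (Kp : 'M[R]_(nu, ny)) (Dp : R) (Lam : 'M[R]_ny)
    (x : 'cV[R]_nx) (w : 'cV[R]_nw) (e : 'cV[R]_ny) :
  Gmat A B C D F Kp Dp Lam *m col_mx x (col_mx w e) =
  col_mx (A *m x + B *m (Kp *m (C *m x + D *m w + e)))
   (col_mx (F *m x) (col_mx (Dp *: (Lam *m (C *m x + D *m w))) e)).
Proof.
rewrite /Gmat /Gmat_row1 /Gmat_row2 /Gmat_row3 /Gmat_row4 !mul_col_mx !mul_row_col.
rewrite !mul0mx !addr0 !add0r mul1mx; congr col_mx.
  by rewrite !mulmxDr !mulmxDl !mulmxA !addrA.
by rewrite -!scalemxAl -scalerDr mulmxDr !mulmxA.
Qed.

Lemma Gmat_gsK (Lam : 'M[R]_ny) (x : 'cV[R]_nx) (w : 'cV[R]_nw) (e : 'cV[R]_ny) E :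
  ((Dmax - E) / (Dmax - Dmin)) *: (Gmat A B C D F K1 Dmin Lam *m col_mx x (col_mx w e))
  + ((E - Dmin) / (Dmax - Dmin)) *: (Gmat A B C D F K2 Dmax Lam *m col_mx x (col_mx w e))
  = col_mx (A *m x + B *m (gsK Dmin Dmax K1 K2 E *m (C *m x + D *m w + e)))
      (col_mx (F *m x) (col_mx (E *: (Lam *m (C *m x + D *m w))) e)).
Proof.
have hDD : Dmax - Dmin != 0 by rewrite subr_eq0 gt_eqF.
rewrite !Gmat_mul; set yt := C *m x + D *m w + e.
set a1 := (Dmax - E) / _; set a2 := (E - Dmin) / _.
have ha12 : a1 + a2 = 1 by rewrite /a1 /a2; field.
have haE : a1 * Dmin + a2 * Dmax = E by rewrite /a1 /a2; field.
rewrite !scale_col_mx !add_col_mx; congr (col_mx _ (col_mx _ (col_mx _ _))).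
- rewrite /gsK -/a1 -/a2 mulmxDl mulmxDr -!scalemxAl -!scalemxAr !scalerDr.
  by rewrite -{3}(scale1r (A *m x)) -ha12 scalerDl addrACA.
- by rewrite -scalerDl ha12 scale1r.
- by rewrite !scalerA -scalerDl haE.
- by rewrite -scalerDl ha12 scale1r.
Qed.

Lemma Lambda_sign_mul (y : 'cV[R]_ny) i :
  (Lambda lam (fun i => 0 <= y i 0) *m y) i 0 = lam i * `|y i 0|.
Proof.
rewrite /Lambda mul_diag_mx mxE mxE.
case: (lerP 0 (y i 0)) => h; first by rewrite ger0_norm // mulr1.
by rewrite ltr0_norm // mulrN1 mulNr mulrN.
Qed.

(* With [Lambda_j] carrying the signs of [y], the triggering bound makes every entry
   of [(a + e, a - e)] at least [-m]: the S-procedure term is almost nonnegative. *)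
Lemma trigger_sprocedure (W : 'M[R]_(ny + ny)) (y e : 'cV[R]_ny) (E m U : R) :
  (forall a b, 0 <= W a b) -> 0 <= E -> 0 <= m ->
  (forall i, `|e i 0| <= E * (lam i * `|y i 0|) + m) ->
  (forall i, E * (lam i * `|y i 0|) + `|e i 0| <= U) ->
  - (2 * m * U * abssum W) <=
  qform W (col_mx (E *: (Lambda lam (fun i => 0 <= y i 0) *m y) + e)
                  (E *: (Lambda lam (fun i => 0 <= y i 0) *m y) - e)).
Proof.
move=> HW hE hm Hb HU; set a := E *: _.
have hai i : a i 0 = E * (lam i * `|y i 0|) by rewrite mxE Lambda_sign_mul.
have hai0 i : 0 <= a i 0 by rewrite hai !mulr_ge0 // ltW.
clearbody a.
have key i s : `|s| = `|e i 0| -> - m <= a i 0 + s /\ `|a i 0 + s| <= U.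
  move=> hs; have := Hb i; have := HU i; rewrite -hai -hs => hU hb.
  have := ler_norm (- s); rewrite normrN => hn; split; first lra.
  by apply: le_trans (ler_normD _ _) _; rewrite ger0_norm.
apply: qform_nneg_lb => //.
  apply: (col_mx_forall (Q := fun r => - m <= r)) => i; rewrite !mxE.
    exact: (key i _ (erefl _)).1.
  exact: (key i _ (normrN _)).1.
apply: (col_mx_forall (Q := fun r => `|r| <= U)) => i; rewrite !mxE.
  exact: (key i _ (erefl _)).2.
exact: (key i _ (normrN _)).2.
Qed.

Lemma closed_loop_trigger (delta : 'I_ny -> R) x w yt yt0 :
  (forall i, 0 <= delta i) ->
  closed_loop A B C D K1 K2 Dmin Dmax lam delta x w yt yt0 ->
  forall k, exists E, [/\ Dmin <= E <= Dmax,
    (forall i, `|(yt k - (C *m x k + D *m w k)) i 0| <=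
               E * (lam i * `|(C *m x k + D *m w k) i 0|) + delta i) &
    x k.+1 = A *m x k + B *m (gsK Dmin Dmax K1 K2 E *m yt k)].
Proof.
move=> hdel Hcl k; have [S [Hp Hy Hx]] := Hcl k.
set E := Eval _ _ _ in Hx.
have hE : Dmin <= E <= Dmax by apply: Eval_itv; exact: ltW.
have hE0 : 0 <= E by case/andP: hE => h _; exact: le_trans hDmin h.
exists E; split => // i; set y := C *m x k + D *m w k.
have -> : (yt k - y) i 0 = yt k i 0 - y i 0 by rewrite !mxE.
rewrite Hy; case: ifP => hi.
  rewrite subrr normr0; apply: addr_ge0 (hdel i).
  by apply: mulr_ge0 => //; rewrite mulr_ge0 // ltW.
by apply: Eprime_le => //; exact (protocol_unsent_le hD Hp (negbT hi)).
Qed.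

(* Absorbing [D w] into the transmission error turns the disturbed loop into a
   disturbance-free one whose triggering bound carries an offset. *)
Lemma closed_loop_trigger_absorb (delta : 'I_ny -> R) (wbar : R) x w yt yt0 :
  (forall i, 0 <= delta i) ->
  closed_loop A B C D K1 K2 Dmin Dmax lam delta x w yt yt0 ->
  (forall k, vnorm_inf (w k) <= wbar) ->
  forall k, exists E, [/\ Dmin <= E <= Dmax,
    (forall i, `|(yt k - C *m x k) i 0| <= E * (lam i * `|(C *m x k) i 0|)
       + \big[Num.max/0]_i ((Dmax * lam i + 1) * wbar * mnorm_inf D + delta i)) &
    x k.+1 = A *m x k + B *m (gsK Dmin Dmax K1 K2 E *m yt k)].
Proof.
move=> hdel Hcl Hw k; have [E [hE Hb Hx]] := closed_loop_trigger hdel Hcl k.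
exists E; split => // i.
have /andP[hE1 hE2] := hE; have hE0 := le_trans hDmin hE1.
have addE (u v : 'cV[R]_ny) : (u + v) i 0 = u i 0 + v i 0 by rewrite mxE.
have subE (u v : 'cV[R]_ny) : (u - v) i 0 = u i 0 - v i 0 by rewrite !mxE.
have hD0 : 0 <= mnorm_inf D by exact: bigmax_ge_id.
have hd : `|(D *m w k) i 0| <= wbar * mnorm_inf D.
  rewrite mulrC; apply: le_trans (coord_mulmx_le_inf D (w k) i) _.
  exact: ler_wpM2l.
have hb := Hb i; rewrite subE !addE in hb.
have := trigger_bound_absorb hE0 hE2 (ltW (hlam i)) hd hb.
rewrite -subE => h; apply: le_trans h _; rewrite lerD2l mulrA.
exact: (le_bigmax _ (fun i => (Dmax * lam i + 1) * wbar * mnorm_inf D + delta i)).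
Qed.

Definition Cx_gain := Dmax * (\sum_i lam i) * abssum C.

Lemma Cx_gain_ge0 : 0 <= Cx_gain.
Proof.
rewrite /Cx_gain !mulr_ge0 ?abssum_ge0 //; first exact: le_trans hDmin (ltW hD).
by apply: sumr_ge0 => i _; exact: ltW.
Qed.

Section Dissipation.
Variables (sigma gamma : R) (P : 'I_2 -> 'M[R]_nx)
  (L M N Z : 'I_2 -> ('I_ny -> bool) -> 'M[R]_ny).

Definition lmi p q j :=
  lmi_mat A B C D F (sel p K1 K2) (sel p Dmin Dmax) sigma gamma
    (Lambda lam j) (P p) (P q) (L q j) (M q j) (N q j) (Z q j).
Definition Wmat q j := block_mx (L q j) (N q j) (N q j)^T (M q j).
Definition Wmax := \sum_q \sum_(f : {ffun 'I_ny -> bool}) abssum (Wmat q f).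
Definition lyap x := Num.max (qform (P ord0) x) (qform (P ord_max) x).
Definition lyap_bound := abssum (P ord0) + abssum (P ord_max).

Hypotheses (hsig : 0 < sigma) (hsig1 : sigma <= 1) (hgam : 0 < gamma)
  (HP : forall p, posdef (P p))
  (HW : forall q j, (Wmat q j)^T = Wmat q j /\ forall a b, 0 <= Wmat q j a b)
  (Hlmi : forall p q j, posdef (lmi p q j)).

Lemma lmi_coercive_unif :
  exists2 mu, 0 < mu & forall p q j v, mu * sqnorm v <= qform (lmi p q j) v.
Proof.
pose T := ('I_2 * 'I_2 * {ffun 'I_ny -> bool})%type.
have /choice[c Hc] : forall t : T, exists c : R,
    0 < c /\ forall v, c * sqnorm v <= qform (lmi t.1.1 t.1.2 t.2) v.
  by move=> t; have [c hc Hc] := posdef_coercive (Hlmi t.1.1 t.1.2 t.2); exists c.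
exists (\big[Num.min/1]_t c t); first by apply: lt_bigmin => // t _; exact: (Hc t).1.
move=> p q j v; have := (Hc (p, q, [ffun i => j i])).2 v.
have -> : fun_of_fin [ffun i => j i] = j by apply/funext => i; rewrite ffunE.
apply: le_trans; apply: ler_wpM2r; first exact: sqnorm_ge0.
exact: bigmin_le.
Qed.

Lemma Wmat_sym q j : (L q j)^T = L q j /\ (M q j)^T = M q j.
Proof.
have [hW _] := HW q j.
have [hL _ _ hM] : [/\ (L q j)^T = L q j, (N q j)^T^T = N q j,
    (N q j)^T = (N q j)^T & (M q j)^T = M q j].
  by apply/eq_block_mx; rewrite -tr_block_mx hW.
by [].
Qed.

Lemma abssum_le_Wmax q j : abssum (Wmat q j) <= Wmax.
Proof.
have -> : j = [ffun i => j i] by apply/funext => i; rewrite ffunE.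
have h1 := ler_term_sum [ffun i => j i]
  (fun f : {ffun 'I_ny -> bool} => abssum_ge0 (Wmat q f)).
apply: le_trans h1 _; rewrite /Wmax.
apply: (@ler_term_sum _ _ (fun q => \sum_(f : {ffun 'I_ny -> bool}) abssum (Wmat q f)) q).
by move=> q'; apply: sumr_ge0 => f _; exact: abssum_ge0.
Qed.

Lemma lyap0 : lyap 0 = 0.
Proof. by rewrite /lyap !qform0 maxxx. Qed.

Lemma lyap_coercive : exists2 c, 0 < c & forall v, c * sqnorm v <= lyap v.
Proof.
have [c hc Hc] := posdef_coercive (HP ord0).
exists c => // v; apply: le_trans (Hc v) _; rewrite /lyap le_max lexx //.
Qed.

Lemma lyap_ge0 v : 0 <= lyap v.
Proof.
have [c hc Hc] := lyap_coercive.
by apply: le_trans (Hc v); rewrite mulr_ge0 ?sqnorm_ge0 // ltW.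
Qed.

Lemma lyap_le v : lyap v <= lyap_bound * sqnorm v.
Proof.
have h1 := abssum_ge0 (P ord0); have h2 := abssum_ge0 (P ord_max).
have hv := sqnorm_ge0 v.
rewrite /lyap /lyap_bound ge_max mulrDl; apply/andP; split.
  by apply: le_trans (qform_le_abssum _ _) _; rewrite lerDl mulr_ge0.
by apply: le_trans (qform_le_abssum _ _) _; rewrite lerDr mulr_ge0.
Qed.

Lemma sigma2_lyap_le v : sigma ^+ 2 * lyap v <= lyap v.
Proof.
rewrite -[leRHS]mul1r; apply: ler_wpM2r; first exact: lyap_ge0.
by rewrite exprn_ile1 // ltW.
Qed.

Section Margin.
Variable mu : R.
Hypotheses (hmu : 0 < mu)
  (Hmu : forall p q j v, mu * sqnorm v <= qform (lmi p q j) v).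

Lemma Xi_psd q j v : 0 <= qform (Xi nz (P q) (L q j) (M q j) (N q j) (Z q j)) v.
Proof.
have := Hmu ord0 q j (col_mx 0 v).
rewrite /lmi /lmi_mat /qform bform_block !bform0u !bform0v !add0r => h.
by apply: le_trans h; rewrite mulr_ge0 ?sqnorm_ge0 // ltW.
Qed.

(* Schur complement of the LMI at the vertex [p], tested on [(x, w, e)]. *)
Lemma lmi_dissipation p q j (x : 'cV[R]_nx) (w : 'cV[R]_nw) (e : 'cV[R]_ny) :
  mu * (sqnorm x + sqnorm w + sqnorm e) <=
  sigma ^+ 2 * qform (P p) x + gamma ^+ 2 * sqnorm w
  + qform (Nplus (N q j) + Z q j) e
  - qform (Xi nz (P q) (L q j) (M q j) (N q j) (Z q j))
      (Gmat A B C D F (sel p K1 K2) (sel p Dmin Dmax) (Lambda lam j)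
         *m col_mx x (col_mx w e)).
Proof.
set xi := col_mx x (col_mx w e); set G := Gmat _ _ _ _ _ _ _ _.
have hxi : sqnorm xi = sqnorm x + sqnorm w + sqnorm e by rewrite !sqnorm_col_mx addrA.
rewrite -hxi; have := Hmu p q j (col_mx xi (- (G *m xi))).
rewrite /lmi /lmi_mat /Phi qform_schur /Gam /xi qform_diag3 !qformZ qform1 -/xi.
rewrite sqnorm_col_mx => h; apply: le_trans h.
by rewrite mulrDr lerDl mulr_ge0 ?sqnorm_ge0 // ltW.
Qed.

Lemma lyap_step_to (q : 'I_2) (x : 'cV[R]_nx) (w : 'cV[R]_nw) (yt : 'cV[R]_ny) E m U :
  Dmin <= E <= Dmax -> 0 <= m -> 0 <= U ->
  (forall i, `|(yt - (C *m x + D *m w)) i 0| <=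
             E * (lam i * `|(C *m x + D *m w) i 0|) + m) ->
  (forall i, E * (lam i * `|(C *m x + D *m w) i 0|) +
             `|(yt - (C *m x + D *m w)) i 0| <= U) ->
  qform (P q) (A *m x + B *m (gsK Dmin Dmax K1 K2 E *m yt)) + sqnorm (F *m x)
   <= sigma ^+ 2 * lyap x + gamma ^+ 2 * sqnorm w
      - mu * (sqnorm x + sqnorm w + sqnorm (yt - (C *m x + D *m w)))
      + 2 * m * U * Wmax.
Proof.
move=> /andP[hE1 hE2] hm hU Hb HU.
set y := C *m x + D *m w in Hb HU *; set e := yt - y in Hb HU *.
set j := fun i => 0 <= y i 0.
have hyt : y + e = yt by rewrite /e addrC subrK.
have hDD : 0 < Dmax - Dmin by rewrite subr_gt0.
have ha1 : 0 <= (Dmax - E) / (Dmax - Dmin) by rewrite divr_ge0 // ?subr_ge0 // ltW.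
have ha2 : 0 <= (E - Dmin) / (Dmax - Dmin) by rewrite divr_ge0 // ?subr_ge0 // ltW.
have ha12 : (Dmax - E) / (Dmax - Dmin) + (E - Dmin) / (Dmax - Dmin) = 1.
  by field; rewrite gt_eqF.
have hconv := qform_convex (Gmat A B C D F K1 Dmin (Lambda lam j) *m col_mx x (col_mx w e))
  (Gmat A B C D F K2 Dmax (Lambda lam j) *m col_mx x (col_mx w e)) (Xi_psd q j) ha1 ha2 ha12.
rewrite Gmat_gsK -/y hyt in hconv.
have k1 := lmi_dissipation ord0 q j x w e; rewrite !sel_ord0 in k1.
have k2 := lmi_dissipation ord_max q j x w e; rewrite !sel_ord_max in k2.
have hmix := convex2_ge ha1 ha2 ha12 k1 k2.
have hV : (Dmax - E) / (Dmax - Dmin) * qform (P ord0) x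
    + (E - Dmin) / (Dmax - Dmin) * qform (P ord_max) x <= lyap x.
  by apply: convex2_le => //; rewrite /lyap le_max lexx ?orbT.
have hsV := ler_wpM2l (exprn_ge0 2 (ltW hsig)) hV.
have [hL hM] := Wmat_sym q j.
have hS := trigger_sprocedure (W := Wmat q j) (HW q j).2 (le_trans hDmin hE1) hm Hb HU.
rewrite -/j in hS; set a := E *: (Lambda lam j *m y) in hconv hS.
have hXq : qform (Xi nz (P q) (L q j) (M q j) (N q j) (Z q j))
    (col_mx (A *m x + B *m (gsK Dmin Dmax K1 K2 E *m yt)) (col_mx (F *m x) (col_mx a e))) =
    qform (P q) (A *m x + B *m (gsK Dmin Dmax K1 K2 E *m yt)) + sqnorm (F *m x)
    + qform (Wmat q j) (col_mx (a + e) (a - e)) + qform (Nplus (N q j) + Z q j) e.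
  by rewrite /Xi qform_diag3 qform1 qform_Rmat // !addrA.
have hW : 2 * m * U * abssum (Wmat q j) <= 2 * m * U * Wmax.
  by apply: ler_wpM2l; rewrite ?abssum_le_Wmax // !mulr_ge0.
have ha2E : (E - Dmin) / (Dmax - Dmin) = 1 - (Dmax - E) / (Dmax - Dmin).
  by rewrite -ha12; ring.
by rewrite hXq ha2E in hconv; rewrite ha2E in hmix hsV; lra.
Qed.

Lemma lyap_step (x : 'cV[R]_nx) (w : 'cV[R]_nw) (yt : 'cV[R]_ny) E m U :
  Dmin <= E <= Dmax -> 0 <= m -> 0 <= U ->
  (forall i, `|(yt - (C *m x + D *m w)) i 0| <=
             E * (lam i * `|(C *m x + D *m w) i 0|) + m) ->
  (forall i, E * (lam i * `|(C *m x + D *m w) i 0|) +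
             `|(yt - (C *m x + D *m w)) i 0| <= U) ->
  lyap (A *m x + B *m (gsK Dmin Dmax K1 K2 E *m yt)) + sqnorm (F *m x)
   <= sigma ^+ 2 * lyap x + gamma ^+ 2 * sqnorm w
      - mu * (sqnorm x + sqnorm w + sqnorm (yt - (C *m x + D *m w)))
      + 2 * m * U * Wmax.
Proof.
move=> hE hm hU Hb HU; have h q := lyap_step_to q hE hm hU Hb HU.
by rewrite {1}/lyap -lerBrDr ge_max !lerBrDr (h ord0) (h ord_max).
Qed.

Lemma closed_loop_dissipation (delta : 'I_ny -> R) x w yt yt0 :
  (forall i, delta i = 0) ->
  closed_loop A B C D K1 K2 Dmin Dmax lam delta x w yt yt0 ->
  forall k, lyap (x k.+1) + sqnorm (F *m x k)
    <= sigma ^+ 2 * lyap (x k) + gamma ^+ 2 * sqnorm (w k).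
Proof.
move=> hd0 Hcl k.
have hdel i : 0 <= delta i by rewrite hd0.
have [E [hE Hb ->]] := closed_loop_trigger hdel Hcl k.
have /andP[hE1 _] := hE; have hE0 := le_trans hDmin hE1.
set y := C *m x k + D *m w k in Hb *; set e := yt k - y in Hb *.
have Hb0 i : `|e i 0| <= E * (lam i * `|y i 0|) + 0 by have := Hb i; rewrite hd0.
have hterm i : 0 <= E * (lam i * `|y i 0|) + `|e i 0|.
  by rewrite addr_ge0 // mulr_ge0 // mulr_ge0 // ltW.
have := lyap_step hE (lexx 0) (sumr_ge0 _ (fun i _ => hterm i)) Hb0
  (fun i => ler_term_sum i hterm).
rewrite !(mulr0, mul0r) addr0 => h; apply: le_trans h _.
by rewrite lerBlDr lerDl mulr_ge0 ?addr_ge0 ?sqnorm_ge0 // ltW.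
Qed.

Definition theta := mu / (2 * (lyap_bound + mu)).
Definition offset := (Wmax ^+ 2 + 2 * (Wmax * Cx_gain) ^+ 2) / mu.

Lemma theta_itv : 0 < theta <= 1.
Proof.
have hb : 0 <= lyap_bound by rewrite addr_ge0 ?abssum_ge0.
have hbm : 0 < lyap_bound + mu by rewrite ltr_wpDl.
rewrite divr_gt0 ?mulr_gt0 //= ler_pdivrMr ?mulr_gt0 // mul1r; lra.
Qed.

Lemma theta_lyap_le v : theta * lyap v <= mu / 2 * sqnorm v.
Proof.
have hb : 0 <= lyap_bound by rewrite addr_ge0 ?abssum_ge0.
have hbm : 0 < lyap_bound + mu by rewrite ltr_wpDl.
have hth : 0 <= theta by case/andP: theta_itv => h _; exact: ltW.
apply: le_trans (ler_wpM2l hth (lyap_le v)) _; rewrite mulrA.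
apply: ler_wpM2r; first exact: sqnorm_ge0.
have E : mu / 2 - theta * lyap_bound = mu * mu / (2 * (lyap_bound + mu)).
  by rewrite /theta; field; rewrite gt_eqF.
have : 0 <= mu * mu / (2 * (lyap_bound + mu)) by rewrite divr_ge0 ?mulr_ge0 // ltW.
by rewrite -E subr_ge0.
Qed.

Lemma offset_ge0 : 0 <= offset.
Proof.
apply: divr_ge0; last exact: ltW.
by rewrite addr_ge0 ?sqr_ge0 // mulr_ge0 ?sqr_ge0 ?ler0n.
Qed.

Lemma closed_loop_contraction (delta : 'I_ny -> R) (wbar : R) x w yt yt0 :
  (forall i, 0 <= delta i) ->
  closed_loop A B C D K1 K2 Dmin Dmax lam delta x w yt yt0 ->
  (forall k, vnorm_inf (w k) <= wbar) ->
  let mm := \big[Num.max/0]_i ((Dmax * lam i + 1) * wbar * mnorm_inf D + delta i) in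
  forall k, lyap (x k.+1) <= (1 - theta) * lyap (x k) + offset * mm ^+ 2.
Proof.
move=> hdel Hcl Hw mm k.
have hmm : 0 <= mm by exact: bigmax_ge_id.
have [E [hE Hz Hx]] := closed_loop_trigger_absorb hdel Hcl Hw k.
have /andP[hE1 hE2] := hE; have hE0 := le_trans hDmin hE1.
set z := yt k - C *m x k in Hz *.
have HU i : E * (lam i * `|(C *m x k) i 0|) + `|z i 0| <= Cx_gain * vnorm (x k) + vnorm z.
  apply: lerD; last exact: coord_le_vnorm.
  have hl : lam i <= \sum_j lam j := ler_term_sum i (fun j => ltW (hlam j)).
  have h1 : E * lam i <= Dmax * \sum_j lam j := ler_pM hE0 (ltW (hlam i)) hE2 hl.
  have := ler_pM (mulr_ge0 hE0 (ltW (hlam i))) (normr_ge0 _) h1 (coord_mulmx_le C (x k) i).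
  by rewrite /Cx_gain !mulrA.
have hU0 : 0 <= Cx_gain * vnorm (x k) + vnorm z.
  by rewrite addr_ge0 ?vnorm_ge0 // mulr_ge0 ?Cx_gain_ge0 ?vnorm_ge0.
have h := lyap_step (x := x k) (w := 0) (yt := yt k) hE hmm hU0.
rewrite mulmx0 addr0 in h; have {h} := h Hz HU.
rewrite sqnorm0 mulr0 !addr0 -Hx -/z => h.
set vx := vnorm (x k) in h HU; set vz := vnorm z in h HU.
have hsx : sqnorm (x k) = vx ^+ 2 by rewrite vnorm_sqr.
have hsz : sqnorm z = vz ^+ 2 by rewrite vnorm_sqr.
rewrite hsx hsz in h.
have hmu2 : 0 < mu / 2 by rewrite divr_gt0.
have y1 := young (mm * Wmax) vz hmu.
have y2 := young (mm * Wmax * Cx_gain) vx hmu2.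
have EK : offset * mm ^+ 2 = (mm * Wmax) ^+ 2 / mu + (mm * Wmax * Cx_gain) ^+ 2 / (mu / 2).
  by rewrite /offset; field; rewrite gt_eqF.
have Emu : mu * (vx ^+ 2 + vz ^+ 2) = mu / 2 * vx ^+ 2 + mu / 2 * vx ^+ 2 + mu * vz ^+ 2.
  by field.
have hth := theta_lyap_le (x k); rewrite hsx in hth.
have hs := sigma2_lyap_le (x k); have hF := sqnorm_ge0 (F *m x k).
rewrite EK; rewrite Emu in h; lra.
Qed.

End Margin.

Lemma closed_loop_l2_gain (delta : 'I_ny -> R) : (forall i, delta i = 0) ->
  forall x w yt yt0,
    closed_loop A B C D K1 K2 Dmin Dmax lam delta x w yt yt0 ->
    x 0%N = 0 ->
    cvgn (series (fun k => vnorm (w k) ^+ 2)) ->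
    cvgn (series (fun k => vnorm (F *m x k) ^+ 2)) /\
    Num.sqrt (limn (series (fun k => vnorm (F *m x k) ^+ 2)))
      <= gamma * Num.sqrt (limn (series (fun k => vnorm (w k) ^+ 2))).
Proof.
move=> hd0 x w yt yt0 Hcl hx0; have [mu hmu Hmu] := lmi_coercive_unif.
apply: (dissipation_l2_gain (ltW hgam) _ (fun k => lyap_ge0 (x k))
  (fun k => sqr_ge0 _) (fun k => sqr_ge0 _)); first by rewrite hx0 lyap0.
move=> k; rewrite !vnorm_sqr.
apply: le_trans (closed_loop_dissipation hmu Hmu hd0 Hcl k) _.
by rewrite lerD2r; exact: sigma2_lyap_le.
Qed.

Lemma closed_loop_decay (delta : 'I_ny -> R) : (forall i, delta i = 0) ->
  exists Mc : R, 1 <= Mc /\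
    forall x yt yt0,
      closed_loop A B C D K1 K2 Dmin Dmax lam delta x (fun _ => 0) yt yt0 ->
      forall k, vnorm (x k) <= Mc * sigma ^+ k * vnorm (x 0%N).
Proof.
move=> hd0; have [mu hmu Hmu] := lmi_coercive_unif; have [c hc Hc] := lyap_coercive.
set Mc := Num.max 1 (Num.sqrt (lyap_bound / c)).
exists Mc; split; first by rewrite le_max lexx.
move=> x yt yt0 Hcl k.
have hs2 : 0 <= sigma ^+ 2 by rewrite exprn_ge0 // ltW.
have Hp : lyap (x k) <= (sigma ^+ 2) ^+ k * lyap (x 0%N).
  elim: k => [|k IH]; first by rewrite expr0 mul1r.
  have := closed_loop_dissipation hmu Hmu hd0 Hcl k.
  rewrite sqnorm0 mulr0 addr0 => h; rewrite [(sigma ^+ 2) ^+ k.+1]exprS -mulrA.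
  have := ler_wpM2l hs2 IH; have := sqnorm_ge0 (F *m x k); lra.
have hb : 0 <= lyap_bound by rewrite addr_ge0 ?abssum_ge0.
have hMc : lyap_bound / c <= Mc ^+ 2.
  rewrite -[lyap_bound / c]sqr_sqrtr ?divr_ge0 ?(ltW hc) //.
  by rewrite (ler_pXn2r (_ : 0 < 2)%N) ?nnegrE ?sqrtr_ge0 ?le_max ?lexx ?orbT //
    (le_trans ler01) // le_max lexx.
have hMc0 : 0 <= Mc by rewrite le_max ler01.
rewrite -(ler_pXn2r (_ : 0 < 2)%N) ?nnegrE ?vnorm_ge0 ?mulr_ge0 ?exprn_ge0 ?vnorm_ge0
  ?(ltW hsig) //.
rewrite !exprMn !vnorm_sqr -exprM mulnC exprM.
rewrite -(ler_pM2l hc); apply: le_trans (Hc (x k)) _; apply: le_trans Hp _.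
have hs2k : 0 <= (sigma ^+ 2) ^+ k by rewrite exprn_ge0.
apply: le_trans (ler_wpM2l hs2k (lyap_le (x 0%N))) _.
rewrite ler_pdivrMr // in hMc.
have := ler_wpM2r (mulr_ge0 hs2k (sqnorm_ge0 (x 0%N))) hMc; lra.
Qed.

Lemma closed_loop_practical (delta : 'I_ny -> R) : (forall i, 0 <= delta i) ->
  exists rho : R, 0 <= rho /\
    forall wbar : R, 0 <= wbar ->
    forall x w yt yt0,
      closed_loop A B C D K1 K2 Dmin Dmax lam delta x w yt yt0 ->
      (forall k, vnorm_inf (w k) <= wbar) ->
      let eta := rho * \big[Num.max/0]_i
                   ((Dmax * lam i + 1) * wbar * mnorm_inf D + delta i) in
      forall eps : R, 0 < eps -> exists K0 : nat,
        forall k, (K0 <= k)%N -> vnorm (x k) <= eta + eps.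
Proof.
move=> hdel; have [mu hmu Hmu] := lmi_coercive_unif; have [c hc Hc] := lyap_coercive.
have hth := theta_itv hmu; have /andP[hth0 _] := hth.
set K := offset mu; set th := theta mu in hth hth0 *.
exists (Num.sqrt (K / (th * c))); split; first exact: sqrtr_ge0.
move=> wbar _ x w yt yt0 Hcl Hw; set mm := \big[Num.max/0]_i _ => eta e he.
have hmm : 0 <= mm by exact: bigmax_ge_id.
have hK : 0 <= K := offset_ge0 hmu.
have [K0 HK0] := contraction_eventually_le hth (mulr_ge0 hK (sqr_ge0 mm))
  (mulr_gt0 hc (exprn_gt0 2 he)) (fun k => lyap_ge0 (x k))
  (closed_loop_contraction hmu Hmu hdel Hcl Hw).
exists K0 => k /HK0 hk; rewrite /eta.
have hrho := sqrtr_ge0 (K / (th * c)).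
apply: le_sqrt_sum; [exact: vnorm_ge0 | exact: mulr_ge0 | exact: ltW | ].
rewrite vnorm_sqr exprMn sqr_sqrtr; last by rewrite divr_ge0 // mulr_ge0 // ltW.
rewrite -(ler_pM2l hc); apply: le_trans (Hc (x k)) (le_trans hk _).
have -> : c * (K / (th * c) * mm ^+ 2 + e ^+ 2) = c * e ^+ 2 + K * mm ^+ 2 / th.
  by field; rewrite !gt_eqF.
by [].
Qed.

End Dissipation.

End ClosedLoop.

Unset Implicit Arguments.

Theorem theorem1 (R : realType) (nx nu ny nw nz : nat)
    (A : 'M[R]_nx) (B : 'M[R]_(nx, nu)) (C : 'M[R]_(ny, nx)) (D : 'M[R]_(ny, nw))
    (F : 'M[R]_(nz, nx)) (K1 K2 : 'M[R]_(nu, ny))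
    (Dmin Dmax : R) (lam delta : 'I_ny -> R) (sigma gamma : R)
    (P : 'I_2 -> 'M[R]_nx)
    (L M N Z : 'I_2 -> ('I_ny -> bool) -> 'M[R]_ny) :
  0 <= Dmin -> Dmin < Dmax ->
  (forall i, 0 < lam i) -> (forall i, 0 <= delta i) ->
  0 < sigma -> sigma <= 1 -> 0 < gamma ->
  (forall p, posdef (P p)) ->
  (forall p j, let W := block_mx (L p j) (N p j) (N p j)^T (M p j) in
     W^T = W /\ forall a b, 0 <= W a b) ->
  (forall p j, (Z p j)^T = Z p j) ->
  (forall (p q : 'I_2) (j : 'I_ny -> bool),
     posdef (lmi_mat A B C D F (sel p K1 K2) (sel p Dmin Dmax) sigma gamma
               (Lambda lam j) (P p) (P q) (L q j) (M q j) (N q j) (Z q j))) ->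
  (* (i) practical stability with ultimate bound eta *)
  (exists rho : R, 0 <= rho /\
     forall wbar : R, 0 <= wbar ->
     forall x w yt yt0,
       closed_loop A B C D K1 K2 Dmin Dmax lam delta x w yt yt0 ->
       (forall k, vnorm_inf (w k) <= wbar) ->
       let eta := rho * \big[Num.max/0]_i
                    ((Dmax * lam i + 1) * wbar * mnorm_inf D + delta i) in
       (* limsup_{k -> oo} ||x[k]|| <= eta *)
       forall eps : R, 0 < eps -> exists K0 : nat,
         forall k, (K0 <= k)%N -> vnorm (x k) <= eta + eps)
  /\
  (* (ii) decay rate sigma *)
  ((forall i, delta i = 0) ->
   exists Mc : R, 1 <= Mc /\
     forall x yt yt0,
       closed_loop A B C D K1 K2 Dmin Dmax lam delta x (fun _ => 0) yt yt0 ->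
       forall k, vnorm (x k) <= Mc * sigma ^+ k * vnorm (x 0%N))
  /\
  (* (iii) l2-gain from w to z = F x is at most gamma *)
  ((forall i, delta i = 0) ->
   forall x w yt yt0,
     closed_loop A B C D K1 K2 Dmin Dmax lam delta x w yt yt0 ->
     x 0%N = 0 ->
     cvgn (series (fun k => vnorm (w k) ^+ 2)) ->
     cvgn (series (fun k => vnorm (F *m x k) ^+ 2)) /\
     Num.sqrt (limn (series (fun k => vnorm (F *m x k) ^+ 2)))
       <= gamma * Num.sqrt (limn (series (fun k => vnorm (w k) ^+ 2)))).
Proof.
move=> hDmin hD hlam hdel hsig hsig1 hgam HP HW _ Hlmi.
split; first exact (closed_loop_practical hDmin hD hlam hsig hsig1 HP HW Hlmi hdel).
split=> hd0; first exact (closed_loop_decay hDmin hD hlam hsig HP HW Hlmi hd0).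
exact (closed_loop_l2_gain hDmin hD hlam hsig hsig1 hgam HP HW Hlmi hd0).
Qed.
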